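(* Let $F(t)=\sum_{j\ge0}a_jt^{j+1}$ be a formal power series with $a_0=1$, let $(b_n)_{n\ge1}$ be real numbers, $\mathbf b=(b_1,b_2,\dots)$, and $G(t)=\sum_{n\ge1}b_n\frac{t^n}{n!}$. Define $$Q(t)=\tfrac12\frac{d}{dt}\bigl(F(t)^2\bigr),\qquad P(t)=\int_0^t\bigl(F'(u)\bigr)^2\,du .$$ Then: (i) the recurrence $$0=\sum_{k=1}^{n}B_{n,k}(\mathbf b)\,\frac{(k-1)!}{2}\sum_{j=0}^{k-1}a_ja_{k-1-j}\bigl[2n(j+1)(k-j)-k(k+1)\bigr]\quad\text{for all }n\ge1$$ holds if and only if $t\,\frac{d}{dt}P(G(t))-Q(G(t))=0$; and (ii) the recurrence $$0=\sum_{k=1}^{n}\sum_{j=0}^{k-1}a_ja_{k-1-j}(j+1)(k-j)\frac{(k-1)!}{2k}\sum_{s=1}^{n}\frac{b_s}{s!(n-s)!}B_{n-s,k-1}(\mathbf b)\bigl(ks(s-1)+n(n-1)\bigr)\quad\text{for all }n\ge1$$ holds if and only if $\frac{d^2}{dt^2}P(G(t))+G''(t)\,P'(G(t))=0$.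
   Context: $B_{n,k}(x_1,x_2,\dots)$ denotes the partial Bell polynomial: the sum over set partitions $\{P_1,\dots,P_k\}$ of $\{1,\dots,n\}$ into $k$ nonempty blocks of $x_{|P_1|}\cdots x_{|P_k|}$ (with $B_{0,0}=1$, $B_{n,0}=0$ for $n>0$). All series are formal power series; $P'$ denotes the derivative of $P$ as a series in its argument. (Context: $F$ is a point field diffeomorphism applied to a free scalar field, and $b_n$ is the sum of on-shell tree-level amplitudes of rooted trees with $n$ on-shell legs and one off-shell propagator leg; the two recurrences are the $m^2$-part and dot-product part of the tree-level recursion.) *)

From mathcomp Require Import all_boot all_order all_algebra.
Set Implicit Arguments. Unset Strict Implicit. Unset Printing Implicit Defensive.
Import Order.TTheory GRing.Theory Num.Theory.
Local Open Scope ring_scope.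

Section FPS.
Variable R : fieldType.

Definition fps := nat -> R.

Definition fps0 : fps := fun _ => 0.
Definition fps1 : fps := fun n => (n == 0%N)%:R.
Definition fps_add (f g : fps) : fps := fun n => f n + g n.
Definition fps_sub (f g : fps) : fps := fun n => f n - g n.
Definition fps_scale (c : R) (f : fps) : fps := fun n => c * f n.
Definition fps_mul (f g : fps) : fps :=
  fun n => \sum_(i < n.+1) f i * g (n - i)%N.
Definition fps_pow (f : fps) (k : nat) : fps := iter k (fps_mul f) fps1.
Definition fps_tmul (f : fps) : fps :=
  fun n => if n is m.+1 then f m else 0.
Definition fps_deriv (f : fps) : fps := fun n => n.+1%:R * f n.+1.
Definition fps_integ (f : fps) : fps :=
  fun n => if n is m.+1 then f m / m.+1%:R else 0.
(* composition f(g(t)); meaningful (and used only) when g 0 = 0, in which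
   case (g^k)_n = 0 for k > n, so the sum may be truncated at k = n. *)
Definition fps_comp (f g : fps) : fps :=
  fun n => \sum_(k < n.+1) f k * fps_pow g k n.

(* partial Bell polynomial B_{n,k}(x_1,x_2,...): sum over set partitions of
   {1..n} (here 'I_n) into k nonempty blocks of prod x_{|block|}.
   (finset's [partition P D] requires the blocks to be nonempty.) *)
Definition bell_partial (n k : nat) (x : nat -> R) : R :=
  \sum_(P : {set {set 'I_n}} | partition P [set: 'I_n] && (#|P| == k))
     \prod_(B in P) x #|B|.

End FPS.

(* The proof compares coefficients.  Its one real ingredient is the
   exponential formula  B_(n,k)(b) = n!/k! [t^n] G(t)^k,  obtained by showing
   that both sides obey the first-block recurrence
       B_(m+1,k+1) = sum_s C(m,s) b_(s+1) B_(m-s,k)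
   (for set partitions, classify by the block containing a fixed point; for
   G^k, differentiate G^(k+1)). *)

From mathcomp Require Import all_boot all_order all_algebra.
From mathcomp Require Import zify ring.
From Stdlib Require Import FunctionalExtensionality.
Set Implicit Arguments. Unset Strict Implicit. Unset Printing Implicit Defensive.
Import Order.TTheory GRing.Theory Num.Theory.
Local Open Scope ring_scope.

Section SetPartitionSums.
Variables (R : comPzRingType) (x : nat -> R) (T : finType).

Definition bell_set (D : {set T}) (k : nat) : R :=
  \sum_(P : {set {set T}} | partition P D && (#|P| == k)) \prod_(B in P) x #|B|.

Lemma bell_set_0 (D : {set T}) : bell_set D 0 = (D == set0)%:R.
Proof.
rewrite /bell_set; have [->|D_neq0] := eqP.
  rewrite (big_pred1 set0) ?big_set0 // => P.
  by rewrite partition_set0 cards_eq0 andbb.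
rewrite big_pred0 // => P; apply/negP => /andP[partP]; rewrite cards_eq0 => /eqP P0.
by apply: D_neq0; rewrite -(cover_partition partP) P0 /cover big_set0.
Qed.

Lemma bell_set_empty (k : nat) : bell_set set0 k.+1 = 0.
Proof.
rewrite /bell_set big_pred0 // => P; apply/negP => /andP[].
by rewrite partition_set0 => /eqP ->; rewrite cards0.
Qed.

(* Adding a block A that contains x0 to a partition of D \ A gives exactly
   the partitions of D with one more block whose block through x0 is A. *)
Lemma partition_add_block (D A : {set T}) (P : {set {set T}}) (x0 : T) (k : nat) :
  x0 \in A -> A \subset D ->
  partition (A |: P) D && (#|A |: P| == k.+1) &&
    (pblock (A |: P) x0 == A) && ((A |: P) :\ A == P) =
  partition P (D :\: A) && (#|P| == k).
Proof.
move=> x0A AD; apply/idP/idP.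
  case/andP => /andP[/andP[partAP cardAP] _] /eqP <-.
  have AP : A \in A |: P by rewrite setU11.
  by rewrite partitionD1 //=; move: cardAP; rewrite (cardsD1 A) AP.
case/andP => partP /eqP cardP.
have AnP : A \notin P.
  by apply/negP => /(partitionS partP) /subsetP /(_ x0 x0A); rewrite inE x0A.
have A_neq0 : A != set0 by apply/set0Pn; exists x0.
have disjA : [disjoint A & D :\: A].
  by rewrite disjoint_sym disjoint_subset; apply/subsetP => y; rewrite !inE => /andP[].
have partAP := partitionU1 partP A_neq0 disjA.
rewrite setDE setUIr setUCr setIT (setUidPr AD) in partAP.
by rewrite partAP cardsU1 AnP cardP setU1K // (def_pblock (partition_trivIset partAP) (setU11 A P) x0A) !eqxx.
Qed.

(* First-block recurrence: classify the partitions of D by the block A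
   containing a fixed point x0 of D. *)
Lemma bell_set_first_block (D : {set T}) (x0 : T) (k : nat) : x0 \in D ->
  bell_set D k.+1 =
  \sum_(A : {set T} | (x0 \in A) && (A \subset D)) x #|A| * bell_set (D :\: A) k.
Proof.
move=> x0D; rewrite /bell_set.
rewrite (partition_big (fun P => pblock P x0)
                       (fun A => (x0 \in A) && (A \subset D))); last first.
  move=> P /andP[partP _]; have x0P : x0 \in cover P by rewrite (cover_partition partP).
  by rewrite mem_pblock x0P (partitionS partP) // pblock_mem.
apply: eq_bigr => A /andP[x0A AD]; rewrite mulr_sumr.
rewrite (reindex_onto (fun P => A |: P) (fun P => P :\ A)); last first.
  move=> P /andP[/andP[partP _] /eqP <-].
  by rewrite setD1K // pblock_mem // (cover_partition partP).
apply: eq_big => [P|P]; first exact: partition_add_block.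
rewrite partition_add_block // => /andP[partP _].
have AnP : A \notin P.
  by apply/negP => /(partitionS partP) /subsetP /(_ x0 x0A); rewrite inE x0A.
by rewrite big_setU1.
Qed.

Lemma sum_subsets_card (B : {set T}) (f : nat -> R) :
  \sum_(A : {set T} | A \subset B) f #|A| = \sum_(s < #|B|.+1) 'C(#|B|, s)%:R * f s.
Proof.
rewrite (partition_big (fun A : {set T} => (inord #|A| : 'I_#|B|.+1)) xpredT) //.
apply: eq_bigr => s _.
transitivity (\sum_(A in [set A : {set T} | A \subset B & #|A| == s]) f s).
  apply: eq_big => [A|A /andP[AB /eqP <-]]; last first.
    by rewrite inordK // ltnS subset_leq_card.
  rewrite inE; case AB: (A \subset B) => //=.
  by rewrite -val_eqE /= inordK // ltnS subset_leq_card.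
by rewrite sumr_const cards_draws mulr_natl.
Qed.

Lemma bell_set_card (c : nat -> nat -> R) :
  c 0%N 0%N = 1 -> (forall m, c m.+1 0%N = 0) -> (forall k, c 0%N k.+1 = 0) ->
  (forall m k, c m.+1 k.+1 = \sum_(s < m.+1) 'C(m, s)%:R * x s.+1 * c (m - s)%N k) ->
  forall (D : {set T}) (k : nat), bell_set D k = c #|D| k.
Proof.
move=> c00 cS0 c0S cSS D; have [n] := ubnP #|D|; elim: n D => // n IH D ltDn [|k].
  rewrite bell_set_0; have [->|D_neq0] := eqP; first by rewrite cards0 c00.
  case cardD: #|D| => [|m]; last by rewrite cS0.
  by move/eqP: cardD; rewrite cards_eq0 => /eqP.
have [->|[x0 x0D]] := set_0Vmem D; first by rewrite bell_set_empty cards0 c0S.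
rewrite (bell_set_first_block _ x0D) (cardsD1 x0 D) x0D add1n cSS.
set B := D :\ x0.
have ltBn : (#|B| < n)%N by move: ltDn; rewrite (cardsD1 x0 D) x0D.
(* a block through x0 is x0 |: A' with A' a subset of B *)
rewrite (reindex_onto (fun A' => x0 |: A') (fun A => A :\ x0)); last first.
  by move=> A /andP[x0A _]; rewrite setD1K.
transitivity (\sum_(A' : {set T} | A' \subset B) x #|A'|.+1 * c (#|B| - #|A'|)%N k).
  apply: eq_big => [A'|A' /andP[/andP[_ sub] /eqP eA']].
    rewrite setU11 /= subUset sub1set x0D /= subsetD1.
    case: (boolP (x0 \in A')) => [x0A'|x0nA']; last by rewrite setU1K // eqxx !andbT.
    by rewrite andbF; apply/negbTE/nandP; right; apply/eqP => e; move: x0A'; rewrite -e setD11.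
  have x0nA' : x0 \notin A' by rewrite -eA' setD11.
  have A'B : A' \subset B by rewrite subsetD1 x0nA' andbT (subset_trans (subsetUr _ _) sub).
  have -> : D :\: (x0 |: A') = B :\: A'.
    by apply/setP => y; rewrite !inE negb_or andbA [(y != x0) && _]andbC.
  rewrite IH; last by rewrite (leq_ltn_trans _ ltBn) // subset_leq_card // subsetDl.
  by rewrite cardsD (setIidPr A'B) cardsU1 x0nA'.
rewrite (sum_subsets_card B (fun s => x s.+1 * c (#|B| - s)%N k)).
by apply: eq_bigr => s _; rewrite mulrA.
Qed.

End SetPartitionSums.

Section PowerSeriesPowers.
Variable R : numFieldType.
Implicit Types (f g : fps R) (k m n N : nat).

Lemma natS_neq0 n : (n.+1%:R : R) != 0.
Proof. by rewrite pnatr_eq0. Qed.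

Lemma fact_neq0 n : (n`!%:R : R) != 0.
Proof. by rewrite pnatr_eq0 -lt0n fact_gt0. Qed.

(* Coefficients below N of f^k only depend on the truncation of f below N,
   so they can be computed in the polynomial ring. *)
Lemma fps_pow_poly f N k n : (n < N)%N ->
  fps_pow f k n = ((\poly_(i < N) f i) ^+ k)`_n.
Proof.
elim: k n => [|k IH] n ltnN; first by rewrite expr0 coef1.
rewrite exprS coefM; apply: eq_bigr => i _.
rewrite coef_poly (leq_ltn_trans (leq_ord i) ltnN) -IH //.
exact: leq_ltn_trans (leq_subr _ _) ltnN.
Qed.

Lemma fps_pow_low g k n : g 0%N = 0 -> (n < k)%N -> fps_pow g k n = 0.
Proof.
move=> g0; elim: k n => [|k IH] n // ltnk.
rewrite /= /fps_mul big1 // => [[[|i] /= ltin]] _; first by rewrite g0 mul0r.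
by rewrite IH ?mulr0 //; lia.
Qed.

Lemma fps_pow_succ g k n : g 0%N = 0 ->
  fps_pow g k.+1 n = \sum_(s < n) g s.+1 * fps_pow g k (n - s.+1)%N.
Proof.
move=> g0; case: n => [|n]; first by rewrite big_ord0 fps_pow_low.
by rewrite /= /fps_mul big_ord_recl /= g0 mul0r add0r.
Qed.

(* The coefficient form of (g^(k+1))' = (k+1) g' g^k. *)
Lemma fps_pow_deriv g k m :
  m.+1%:R * fps_pow g k.+1 m.+1 =
  k.+1%:R * \sum_(s < m.+1) (s.+1%:R * g s.+1) * fps_pow g k (m - s)%N.
Proof.
set p := \poly_(i < m.+2) g i.
have := coef_deriv (p ^+ k.+1) m.
rewrite deriv_exp coefMn coefM -(fps_pow_poly _ _ (ltnSn m.+1)) => coef_m.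
rewrite mulr_natl -coef_m mulr_natl; congr (_ *+ _); apply: eq_bigr => s _.
rewrite coef_deriv coef_poly ltnS (leq_trans (ltn_ord s)) // mulr_natl.
by rewrite (fps_pow_poly _ _ (_ : (m - s < m.+2)%N)) // ltnS (leq_trans (leq_subr _ _)).
Qed.

Lemma sum_pow_trunc g (f : nat -> R) N r : g 0%N = 0 -> (r < N)%N ->
  \sum_(k < N) f k * fps_pow g k r = \sum_(k < r.+1) f k * fps_pow g k r.
Proof.
move=> g0 ltrN; rewrite [RHS](big_ord_widen N (fun k => f k * fps_pow g k r)) //.
rewrite [RHS]big_mkcond; apply: eq_bigr => k _; case: ifP => // /negbT.
by rewrite -leqNgt => ltrk; rewrite fps_pow_low ?mulr0.
Qed.

End PowerSeriesPowers.

Section ExponentialFormula.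
Variable R : numFieldType.
Implicit Types (b : nat -> R) (k m n : nat).

Definition egf b : fps R := fun n => if n is m.+1 then b n / n`!%:R else 0.

Lemma egfS b n : egf b n.+1 = b n.+1 / n.+1`!%:R. Proof. by []. Qed.

(* m!/k! [t^m] G^k, the candidate value of B_{m,k}(b). *)
Definition egf_pow_scaled b m k : R := m`!%:R / k`!%:R * fps_pow (egf b) k m.

(* The scaled coefficients of G^k satisfy the first-block recurrence; this
   is the derivative identity (G^(k+1))' = (k+1) G' G^k. *)
Lemma egf_pow_scaled_rec b m k :
  egf_pow_scaled b m.+1 k.+1 =
  \sum_(s < m.+1) 'C(m, s)%:R * b s.+1 * egf_pow_scaled b (m - s)%N k.
Proof.
have pow_succ : fps_pow (egf b) k.+1 m.+1 = k.+1%:R / m.+1%:R *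
    \sum_(s < m.+1) s.+1%:R * egf b s.+1 * fps_pow (egf b) k (m - s)%N.
  by apply: (mulfI (natS_neq0 R m)); rewrite fps_pow_deriv; field; rewrite nat1r natS_neq0.
rewrite /egf_pow_scaled pow_succ !factS !natrM mulrA mulr_sumr.
apply: eq_bigr => s _; rewrite egfS factS natrM -(bin_fact (leq_ord s)) !natrM.
by field; rewrite ?nat1r ?natS_neq0 ?fact_neq0.
Qed.

Lemma bell_partial_egf b n k : bell_partial n k b = egf_pow_scaled b n k.
Proof.
rewrite -[bell_partial n k b]/(bell_set b [set: 'I_n] k).
rewrite (bell_set_card (c := egf_pow_scaled b)) ?cardsT ?card_ord //.
- by rewrite /egf_pow_scaled /= /fps1 /= divr1 !mulr1.
- by move=> m; rewrite /egf_pow_scaled /= /fps1 /= mulr0.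
- by move=> k'; rewrite /egf_pow_scaled fps_pow_low ?mulr0.
- exact: egf_pow_scaled_rec.
Qed.

Lemma egf_pow_bell b n k :
  fps_pow (egf b) k n = k`!%:R / n`!%:R * bell_partial n k b.
Proof.
rewrite bell_partial_egf /egf_pow_scaled mulrA.
by field; rewrite ?fact_neq0.
Qed.

End ExponentialFormula.

(* A series vanishes iff a sequence r does, when its coefficients are r
   shifted by d and rescaled by nonzero factors (the low terms of r being 0). *)
Lemma fps_eq0_iff (R : fieldType) (f : fps R) (c r : nat -> R) (d : nat) :
  r 0%N = 0 -> (forall n, (0 < n < d)%N -> r n = 0) ->
  (forall m, c m != 0) -> (forall m, f m = c m * r (m + d)%N) ->
  (forall n, (0 < n)%N -> 0 = r n) <-> f = fps0 R.
Proof.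
move=> r0 r_low c_neq0 fE; split=> [r_eq0|f0 n n_gt0].
  apply: functional_extensionality => m; rewrite fE /fps0.
  by have [->|?] := posnP (m + d); rewrite ?r0 -?r_eq0 ?mulr0.
have [ltnd|/subnK <-] := ltnP n d; first by rewrite r_low ?n_gt0.
by apply/esym/(mulfI (c_neq0 (n - d)%N)); rewrite -fE f0 mulr0.
Qed.

Section Coefficients.
Variables (R : numFieldType) (a b : nat -> R).

Definition Fa : fps R := fun n => if n is m.+1 then a m else 0.
Definition Qa : fps R := fps_scale (2%:R)^-1 (fps_deriv (fps_mul Fa Fa)).
Definition Pa : fps R := fps_integ (fps_mul (fps_deriv Fa) (fps_deriv Fa)).

(* [t^(k+1)] F^2 and [t^(k-1)] F'^2 *)
Definition conv k := \sum_(j < k) a j * a (k.-1 - j)%N.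
Definition conv_deriv k := \sum_(j < k) a j * a (k.-1 - j)%N * (j.+1)%:R * (k - j)%:R.

Lemma Pa0 : Pa 0%N = 0. Proof. by []. Qed.

Lemma PaS k : Pa k.+1 = conv_deriv k.+1 / k.+1%:R.
Proof.
rewrite /Pa /fps_integ /conv_deriv /=; congr (_ / _); apply: eq_bigr => j _.
by rewrite /fps_deriv /= subSn ?(leq_ord j) //; ring.
Qed.

Lemma QaE k : Qa k = 2%:R^-1 * (k.+1%:R * conv k).
Proof.
rewrite /Qa /fps_scale /fps_deriv /fps_mul /conv; congr (_ * (_ * _)).
rewrite big_ord_recl /= mul0r add0r big_ord_recr /= subnn mulr0 addr0.
apply: eq_bigr => i _; rewrite subSS; case: k i => [[]//|k] i /=.
by rewrite subSn // -ltnS.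
Qed.

Lemma Qa0 : Qa 0%N = 0.
Proof. by rewrite QaE /conv big_ord0 !mulr0. Qed.

Definition rec_i n := \sum_(1 <= k < n.+1)
  bell_partial n k b * ((k.-1)`!%:R / 2%:R) *
  \sum_(j < k) a j * a (k.-1 - j)%N *
    (2%:R * n%:R * (j.+1)%:R * (k - j)%:R - k%:R * (k.+1)%:R).

Definition rec_ii n := \sum_(1 <= k < n.+1)
  \sum_(j < k) a j * a (k.-1 - j)%N * (j.+1)%:R * (k - j)%:R *
    ((k.-1)`!%:R / (2%:R * k%:R)) *
    \sum_(1 <= s < n.+1)
      b s / ((s`!)%:R * ((n - s)`!)%:R) * bell_partial (n - s) k.-1 b *
      (k * s * (s - 1) + n * (n - 1))%:R.

Definition ode_i : fps R :=
  fps_sub (fps_tmul (fps_deriv (fps_comp Pa (egf b)))) (fps_comp Qa (egf b)).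
Definition ode_ii : fps R :=
  fps_add (fps_deriv (fps_deriv (fps_comp Pa (egf b))))
          (fps_mul (fps_deriv (fps_deriv (egf b))) (fps_comp (fps_deriv Pa) (egf b))).

Lemma rec_i0 : rec_i 0 = 0. Proof. by rewrite /rec_i big_geq. Qed.
Lemma rec_ii0 : rec_ii 0 = 0. Proof. by rewrite /rec_ii big_geq. Qed.

Lemma rec_ii1 : rec_ii 1 = 0.
Proof. by rewrite /rec_ii !big_nat1 big1 // => j _; rewrite [X in _ * X]mulr0 mulr0. Qed.

Lemma ode_i_coef m : ode_i m = (m`!%:R)^-1 * rec_i m.
Proof.
case: m => [|m].
  by rewrite rec_i0 mulr0 /ode_i /fps_sub /fps_comp big_ord1 Qa0 mul0r subr0.
rewrite /ode_i /fps_sub /fps_tmul /fps_deriv /fps_comp mulr_sumr -sumrB.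
rewrite big_ord_recl Pa0 Qa0 !mul0r mulr0 subrr add0r.
rewrite /rec_i big_add1 big_mkord mulr_sumr; apply: eq_bigr => k _.
rewrite !lift0 PaS QaE egf_pow_bell /=.
have -> : \sum_(j < k.+1) a j * a (k - j)%N *
     (2%:R * m.+1%:R * j.+1%:R * (k.+1 - j)%:R - k.+1%:R * k.+2%:R) =
   2%:R * m.+1%:R * conv_deriv k.+1 - k.+1%:R * k.+2%:R * conv k.+1.
  by rewrite /conv_deriv /conv !mulr_sumr -sumrB; apply: eq_bigr => j _ /=; ring.
rewrite factS natrM.
by field; rewrite ?nat1r ?natS_neq0 ?fact_neq0.
Qed.

(* Recurrence (ii) rewritten through the exponential formula: the term
   k s (s-1) gives the coefficients of G'' (P' o G), the term n (n-1) those
   of (P o G)''. *)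
Lemma rec_ii_expand n : 2%:R * rec_ii n = \sum_(k < n) \sum_(s < n)
  (conv_deriv k.+1 * (s.+1 * s)%:R * egf b s.+1 * fps_pow (egf b) k (n - s.+1)%N +
   (n * (n - 1))%:R * (Pa k.+1 * (egf b s.+1 * fps_pow (egf b) k (n - s.+1)%N))).
Proof.
rewrite /rec_ii big_add1 succnK big_mkord mulr_sumr; apply: eq_bigr => k _.
rewrite PaS -!mulr_suml -/(conv_deriv k.+1) big_add1 succnK big_mkord !mulr_sumr.
apply: eq_bigr => s _; rewrite bell_partial_egf /egf_pow_scaled subn1 (succnK s) egfS.
rewrite !natrM natrD !natrM.
by field; rewrite ?nat1r ?natS_neq0 ?fact_neq0.
Qed.

Lemma ode_ii_coef m : ode_ii m = 2%:R * rec_ii m.+2.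
Proof.
rewrite rec_ii_expand.
under eq_bigr => k _ do rewrite big_split.
rewrite big_split /ode_ii /fps_add [RHS]addrC; congr (_ + _); symmetry.
  transitivity (\sum_(k < m.+2)
      (m.+2 * (m.+2 - 1))%N%:R * (Pa k.+1 * fps_pow (egf b) k.+1 m.+2)).
    by apply: eq_bigr => k _; rewrite fps_pow_succ // !mulr_sumr.
  rewrite /fps_deriv /fps_comp [in RHS]big_ord_recl Pa0 mul0r add0r !mulr_sumr.
  by apply: eq_bigr => k _; rewrite lift0 subn1 /= natrM; ring.
rewrite exchange_big big_ord_recl big1 ?add0r; last first.
  by move=> k _; rewrite muln0 mulr0 !mul0r.
rewrite /fps_mul /= add0r; apply: eq_bigr => i _.
rewrite (_ : bump 0 i = i.+1) // -(egfS b i.+1) subSS.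
rewrite (sum_pow_trunc (fun k => conv_deriv k.+1 * (i.+2 * i.+1)%:R * egf b i.+2)) //;
  last by rewrite ltnS (leq_trans (leq_subr _ _)).
rewrite /fps_comp mulr_sumr; apply: eq_bigr => k _.
by rewrite /fps_deriv PaS natrM; field; rewrite nat1r natS_neq0.
Qed.

End Coefficients.

Theorem proposition5p5p2 (R : realFieldType) (a b : nat -> R) (ha0 : a 0%N = 1) :
  let F : fps R := fun n => if n is m.+1 then a m else 0 in
  let G : fps R := fun n => if n is m.+1 then b n / (n`!)%:R else 0 in
  let Q : fps R := fps_scale (2%:R)^-1 (fps_deriv (fps_mul F F)) in
  let P : fps R := fps_integ (fps_mul (fps_deriv F) (fps_deriv F)) in
  ((forall n : nat, (0 < n)%N ->
      0 = \sum_(1 <= k < n.+1)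
            bell_partial n k b * ((k.-1)`!%:R / 2%:R) *
            \sum_(j < k) a j * a (k.-1 - j)%N *
               (2%:R * n%:R * (j.+1)%:R * (k - j)%:R - k%:R * (k.+1)%:R))
   <-> fps_sub (fps_tmul (fps_deriv (fps_comp P G))) (fps_comp Q G) = fps0 R)
  /\
  ((forall n : nat, (0 < n)%N ->
      0 = \sum_(1 <= k < n.+1)
            \sum_(j < k) a j * a (k.-1 - j)%N * (j.+1)%:R * (k - j)%:R *
               ((k.-1)`!%:R / (2%:R * k%:R)) *
               \sum_(1 <= s < n.+1)
                  b s / ((s`!)%:R * ((n - s)`!)%:R) * bell_partial (n - s) k.-1 b *
                  (k * s * (s - 1) + n * (n - 1))%:R)
   <-> fps_add (fps_deriv (fps_deriv (fps_comp P G)))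
               (fps_mul (fps_deriv (fps_deriv G)) (fps_comp (fps_deriv P) G))
       = fps0 R).
Proof.
move=> F G Q P; split.
-
  apply: (@fps_eq0_iff _ (ode_i a b) (fun m => (m`!%:R)^-1) (rec_i a b) 0%N (rec_i0 a b)).
  + by move=> m; rewrite ltn0 andbF.
  + by move=> m; rewrite invr_eq0 fact_neq0.
  + by move=> m; rewrite addn0 ode_i_coef.
-
  apply: (@fps_eq0_iff _ (ode_ii a b) (fun=> 2%:R) (rec_ii a b) 2 (rec_ii0 a b)).
  + by case=> [|[|//]] //; rewrite rec_ii1.
  + by move=> m; rewrite pnatr_eq0.
  + by move=> m; rewrite addn2 ode_ii_coef.
Qed.
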